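(* For every $0<\gamma<\frac12$, the function $m\mapsto F(m,\gamma)$ is strictly convex on the real interval $[2,\infty)$.
   Context: Logarithms base 2. For real $m\ge 2$ and $\gamma\in(0,\frac12)$, $$F(m,\gamma)=\min_{x\in(0,1)}\Big[\log\big((1+x)^m+(1-x)^m\big)-m\gamma\log x-1\Big].$$ *)

From Stdlib Require Import Reals Lra ClassicalEpsilon.
Open Scope R_scope.

Definition log2 (x : R) : R := ln x / ln 2.

Definition Fobj (m g x : R) : R :=
  log2 (Rpower (1 + x) m + Rpower (1 - x) m) - m * g * log2 x - 1.

Definition is_min_value (m g v : R) : Prop :=
  (exists x, 0 < x < 1 /\ Fobj m g x = v) /\
  (forall x, 0 < x < 1 -> v <= Fobj m g x).

(* F(m,gamma) = min_{x in (0,1)} Fobj m gamma x  (chosen by epsilon;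
   when the minimum exists it is this unique value). *)
Definition F (m g : R) : R :=
  epsilon (inhabits 0) (fun v => is_min_value m g v).

Definition strictly_convex_on (P : R -> Prop) (f : R -> R) : Prop :=
  forall a b t, P a -> P b -> a <> b -> 0 < t < 1 ->
    f (t * a + (1 - t) * b) < t * f a + (1 - t) * f b.

(* Substituting x = (1 - e^-u)/(1 + e^-u) turns the objective into
   G(m, u) = m A(u) + B(m u) - 1 with
   A(u) = 1 - log2(1 + e^-u) - gamma log2((1 - e^-u)/(1 + e^-u)) and B(w) = log2(1 + e^-w).
   Both A and B are strictly convex where it matters: B everywhere, A on (0, u*],
   and for m >= 2 the minimum over u is attained in (0, u*].  The map (m, w) |-> m A(w/m) + B(w)
   is then jointly strictly convex (m A(w/m) is the perspective of A), so its partial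
   minimum F(m, gamma) = min_w is strictly convex in m. *)

From Stdlib Require Import Reals Lra ClassicalEpsilon.
From Coquelicot Require Import Coquelicot.
Open Scope R_scope.

Lemma ln2_pos : 0 < ln 2.
Proof. pose proof ln_lt_2; lra. Qed.

Lemma exp_neg_lt1 u : 0 < u -> exp (- u) < 1.
Proof. intro hu. rewrite <- exp_0. apply exp_increasing; lra. Qed.

Lemma exp_le_exp x y : x <= y -> exp x <= exp y.
Proof. intros [h| ->]; [left; apply exp_increasing; exact h | lra]. Qed.

Section RealCalculus.

Variables f f' : R -> R.

Lemma le_of_derive_nonneg a b : a <= b ->
  (forall c, a <= c <= b -> is_derive f c (f' c)) ->
  (forall c, a <= c <= b -> 0 <= f' c) -> f a <= f b.
Proof.
  intros [hab| <-] hd hs; [|lra].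
  destruct (MVT_cor2 f f' a b hab) as [c [e hc]].
  - intros c hc. apply is_derive_Reals. auto.
  - assert (0 <= f' c) by (apply hs; lra). nra.
Qed.

Lemma le_of_derive_nonpos a b : a <= b ->
  (forall c, a <= c <= b -> is_derive f c (f' c)) ->
  (forall c, a <= c <= b -> f' c <= 0) -> f b <= f a.
Proof.
  intros [hab| <-] hd hs; [|lra].
  destruct (MVT_cor2 f f' a b hab) as [c [e hc]].
  - intros c hc. apply is_derive_Reals. auto.
  - assert (f' c <= 0) by (apply hs; lra). nra.
Qed.

Variable P : R -> Prop.
Hypothesis P_interval : forall x y z, P x -> P y -> x <= z <= y -> P z.

Lemma convex_combination_mem x y l : P x -> P y -> 0 <= l <= 1 -> P (l * x + (1 - l) * y).
Proof.
  intros hx hy hl. destruct (Rle_or_lt x y).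
  - apply (P_interval x y); auto; nra.
  - apply (P_interval y x); auto; nra.
Qed.

(* Mean value theorem on [x, z] and [z, y] for the intermediate point z. *)
Lemma strictly_convex_on_of_derive_increasing :
  (forall x, P x -> is_derive f x (f' x)) ->
  (forall x y, P x -> P y -> x < y -> f' x < f' y) ->
  strictly_convex_on P f.
Proof.
  intros hd hm.
  enough (H : forall x y l, P x -> P y -> x < y -> 0 < l < 1 ->
            f (l * x + (1 - l) * y) < l * f x + (1 - l) * f y).
  { intros x y l hx hy hxy hl. destruct (Rlt_or_le x y).
    - auto.
    - replace (l * x + (1 - l) * y) with ((1 - l) * y + (1 - (1 - l)) * x) by ring.
      replace (l * f x + (1 - l) * f y) with ((1 - l) * f y + (1 - (1 - l)) * f x) by ring.
      apply H; auto; lra. }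
  intros x y l hx hy hxy hl. set (z := l * x + (1 - l) * y).
  assert (hxz : x < z) by (unfold z; nra).
  assert (hzy : z < y) by (unfold z; nra).
  assert (hPxy : forall c, x <= c <= y -> P c) by (intros; apply (P_interval x y); auto).
  destruct (MVT_cor2 f f' x z hxz) as [c1 [e1 hc1]].
  { intros c hc. apply is_derive_Reals, hd, hPxy. lra. }
  destruct (MVT_cor2 f f' z y hzy) as [c2 [e2 hc2]].
  { intros c hc. apply is_derive_Reals, hd, hPxy. lra. }
  assert (hlt : f' c1 < f' c2) by (apply hm; try apply hPxy; lra).
  replace (z - x) with ((1 - l) * (y - x)) in e1 by (unfold z; ring).
  replace (y - z) with (l * (y - x)) in e2 by (unfold z; ring).
  assert (0 < l * (1 - l) * (y - x) * (f' c2 - f' c1)).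
  { repeat apply Rmult_lt_0_compat; lra. }
  nra.
Qed.

End RealCalculus.

Lemma convex_le_of_strictly_convex (P : R -> Prop) f x y l :
  strictly_convex_on P f -> P x -> P y -> 0 < l < 1 ->
  f (l * x + (1 - l) * y) <= l * f x + (1 - l) * f y.
Proof.
  intros hf hx hy hl. destruct (Req_dec x y) as [<- | hne].
  - replace (l * x + (1 - l) * x) with x by ring. lra.
  - left. apply hf; auto.
Qed.

(* Joint strict convexity of the perspective (m, w) |-> m A(w/m) + B(w), written in the
   coordinates (m, u = w/m): the combination of (m1, u1) and (m2, u2) with weight l
   is (M, U) with M U = l m1 u1 + (1 - l) m2 u2.  When u1 = u2 the strictness comes
   from B, since then m1 u1 <> m2 u2. *)
Lemma perspective_combination_lt (P : R -> Prop) (A B : R -> R) m1 m2 u1 u2 l :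
  (forall x y z, P x -> P y -> x <= z <= y -> P z) -> (forall u, P u -> 0 < u) ->
  strictly_convex_on P A -> strictly_convex_on (fun _ => True) B ->
  0 < m1 -> 0 < m2 -> m1 <> m2 -> P u1 -> P u2 -> 0 < l < 1 ->
  let M := l * m1 + (1 - l) * m2 in
  exists U, P U /\
    M * A U + B (M * U) < l * (m1 * A u1 + B (m1 * u1)) + (1 - l) * (m2 * A u2 + B (m2 * u2)).
Proof.
  intros hP hpos hA hB hm1 hm2 hne hu1 hu2 hl M.
  assert (hM : 0 < M) by (unfold M; nra).
  set (mu := l * m1 / M).
  assert (hmu : 0 < mu < 1).
  { unfold mu. split; [apply Rdiv_lt_0_compat; nra|].
    apply Rmult_lt_reg_r with M; [lra|]. field_simplify; unfold M; nra. }
  assert (eM1 : M * mu = l * m1) by (unfold mu; field; lra).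
  assert (eM2 : M * (1 - mu) = (1 - l) * m2).
  { replace (M * (1 - mu)) with (M - M * mu) by ring. rewrite eM1. unfold M. ring. }
  set (U := mu * u1 + (1 - mu) * u2).
  exists U. split; [apply (convex_combination_mem P); auto; lra|].
  assert (eMU : M * U = l * (m1 * u1) + (1 - l) * (m2 * u2)).
  { unfold U. rewrite Rmult_plus_distr_l, <- !Rmult_assoc, eM1, eM2. ring. }
  rewrite eMU.
  pose proof (convex_le_of_strictly_convex P A u1 u2 mu hA hu1 hu2 hmu) as hAle.
  pose proof (convex_le_of_strictly_convex _ B (m1 * u1) (m2 * u2) l hB I I hl) as hBle.
  fold U in hAle.
  destruct (Req_dec u1 u2) as [<- | hneu].
  - assert (hw : m1 * u1 <> m2 * u1) by (pose proof (hpos u1 hu1); intro h; apply hne; nra).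
    pose proof (hB _ _ l I I hw hl).
    assert (M * A U <= l * m1 * A u1 + (1 - l) * m2 * A u1) by (rewrite <- eM1, <- eM2; nra).
    nra.
  - pose proof (hA _ _ mu hu1 hu2 hneu hmu) as hAlt. fold U in hAlt.
    assert (M * A U < l * m1 * A u1 + (1 - l) * m2 * A u2) by (rewrite <- eM1, <- eM2; nra).
    nra.
Qed.

Definition Apart (g u : R) : R :=
  (ln 2 - ln (1 + exp (- u)) - g * (ln (1 - exp (- u)) - ln (1 + exp (- u)))) / ln 2.
Definition Bpart (w : R) : R := ln (1 + exp (- w)) / ln 2.
Definition Gobj (m g u : R) : R := m * Apart g u + Bpart (m * u) - 1.

Definition alpha (g : R) : R := 1 - 2 * g.
Definition slopeA (g t : R) : R := t * (alpha g - t) / (1 - t * t).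
Definition Apart' (g u : R) : R := slopeA g (exp (- u)) / ln 2.
Definition Bpart' (w : R) : R := - (exp (- w) / (1 + exp (- w))) / ln 2.
Definition Gobj' (m g u : R) : R := m * (Apart' g u + Bpart' (m * u)).

(* The root in (0, 1) of [alpha (1 + t^2) = 2 t]; [Apart] is strictly convex where
   [e^-u >= tstar]. *)
Definition tstar (g : R) : R := alpha g / (1 + sqrt (1 - alpha g * alpha g)).
Definition ustar (g : R) : R := - ln (tstar g).
Definition ulow (g : R) : R := - ln (alpha g).

Lemma is_derive_Apart g u : 0 < u -> is_derive (Apart g) u (Apart' g u).
Proof.
  intro hu. pose proof (exp_neg_lt1 u hu). pose proof (exp_pos (- u)). pose proof ln2_pos.
  unfold Apart, Apart', slopeA, alpha. auto_derive.
  - repeat split; lra.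
  - field. repeat split; nra.
Qed.

Lemma is_derive_Bpart w : is_derive Bpart w (Bpart' w).
Proof.
  pose proof (exp_pos (- w)). pose proof ln2_pos.
  unfold Bpart, Bpart'. auto_derive.
  - lra.
  - field. lra.
Qed.

Lemma is_derive_Gobj m g u : 0 < u -> is_derive (Gobj m g) u (Gobj' m g u).
Proof.
  intro hu. pose proof (exp_neg_lt1 u hu). pose proof (exp_pos (- u)).
  pose proof (exp_pos (- (m * u))). pose proof ln2_pos.
  unfold Gobj, Gobj', Apart, Bpart, Apart', Bpart', slopeA, alpha. auto_derive.
  - repeat split; lra.
  - field. repeat split; nra.
Qed.

Section FixedGamma.

Variable g : R.
Hypothesis g_range : 0 < g < 1 / 2.

Lemma tstar_spec :
  0 < tstar g < alpha g /\ alpha g < 1 /\ alpha g * (1 + tstar g * tstar g) = 2 * tstar g.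
Proof.
  unfold tstar. set (a := alpha g).
  assert (ha : 0 < a < 1) by (unfold a, alpha; lra).
  set (s := sqrt (1 - a * a)).
  assert (hs0 : 0 < s) by (apply sqrt_lt_R0; nra).
  assert (hss : s * s = 1 - a * a) by (apply sqrt_sqrt; nra).
  split; [split|split]; try lra.
  - apply Rdiv_lt_0_compat; lra.
  - apply Rmult_lt_reg_r with (1 + s); [lra|]. field_simplify; nra.
  - assert (e : a / (1 + s) * (a / (1 + s)) = (1 - s) / (1 + s)).
    { replace (a / (1 + s) * (a / (1 + s))) with ((a * a) / ((1 + s) * (1 + s))) by (field; lra).
      replace (a * a) with ((1 - s) * (1 + s)) by lra. field. lra. }
    rewrite e. field. lra.
Qed.

Lemma exp_neg_ustar : exp (- ustar g) = tstar g.
Proof. unfold ustar. rewrite Ropp_involutive. apply exp_ln. apply tstar_spec. Qed.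

Lemma exp_neg_ulow : exp (- ulow g) = alpha g.
Proof. unfold ulow. rewrite Ropp_involutive. apply exp_ln. pose proof tstar_spec. lra. Qed.

Lemma ulow_range : 0 < ulow g < ustar g.
Proof.
  destruct tstar_spec as [hs [ha _]]. unfold ulow, ustar. split.
  - rewrite <- Ropp_0, <- ln_1. apply Ropp_lt_contravar, ln_increasing; lra.
  - apply Ropp_lt_contravar, ln_increasing; lra.
Qed.

Lemma alpha_quad_nonneg t : 0 <= t <= tstar g -> 0 <= alpha g * (1 + t * t) - 2 * t.
Proof.
  intro ht. destruct tstar_spec as [hs [ha ea]]. set (s := tstar g) in *.
  assert (e : (1 + s * s) * (alpha g * (1 + t * t) - 2 * t) = 2 * (s - t) * (1 - s * t)).
  { replace ((1 + s * s) * (alpha g * (1 + t * t) - 2 * t))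
      with (alpha g * (1 + s * s) * (1 + t * t) - 2 * t * (1 + s * s)) by ring.
    rewrite ea. ring. }
  assert (0 <= 2 * (s - t) * (1 - s * t)) by (apply Rmult_le_pos; nra).
  nra.
Qed.

Lemma alpha_quad_pair_pos t1 t2 : tstar g <= t2 < t1 -> t1 < 1 ->
  0 < t1 + t2 - alpha g * (1 + t1 * t2).
Proof.
  intros ht ht1. destruct tstar_spec as [hs [ha ea]]. set (s := tstar g) in *.
  assert (e : (1 + s * s) * (t1 + t2 - alpha g * (1 + t1 * t2))
              = (t1 - s) * (1 - s * t2) + (t2 - s) * (1 - s * t1)).
  { replace ((1 + s * s) * (t1 + t2 - alpha g * (1 + t1 * t2)))
      with ((t1 + t2) * (1 + s * s) - alpha g * (1 + s * s) * (1 + t1 * t2)) by ring.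
    rewrite ea. ring. }
  assert (0 < (t1 - s) * (1 - s * t2)) by (apply Rmult_lt_0_compat; nra).
  assert (0 <= (t2 - s) * (1 - s * t1)) by (apply Rmult_le_pos; nra).
  nra.
Qed.

Lemma slopeA_lt t1 t2 : tstar g <= t2 < t1 -> t1 < 1 -> slopeA g t1 < slopeA g t2.
Proof.
  intros ht ht1. destruct tstar_spec as [hs _].
  pose proof (alpha_quad_pair_pos t1 t2 ht ht1).
  assert (e : slopeA g t2 - slopeA g t1
              = (t1 - t2) * (t1 + t2 - alpha g * (1 + t1 * t2)) / ((1 - t1 * t1) * (1 - t2 * t2))).
  { unfold slopeA. field. split; nra. }
  assert (0 < (t1 - t2) * (t1 + t2 - alpha g * (1 + t1 * t2)) / ((1 - t1 * t1) * (1 - t2 * t2))).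
  { apply Rdiv_lt_0_compat; [nra|]. apply Rmult_lt_0_compat; nra. }
  lra.
Qed.

Lemma slopeA_nonpos t : alpha g <= t < 1 -> slopeA g t <= 0.
Proof.
  intro ht. destruct tstar_spec as [hs _]. unfold slopeA, Rdiv.
  apply Rmult_le_0_r; [nra|]. left. apply Rinv_0_lt_compat. nra.
Qed.

Lemma slopeA_ge t : 0 < t <= tstar g -> t * t / (1 + t * t) <= slopeA g t.
Proof.
  intro ht. destruct tstar_spec as [hs [ha _]].
  pose proof (alpha_quad_nonneg t ltac:(lra)).
  assert (e : slopeA g t - t * t / (1 + t * t)
              = t * (alpha g * (1 + t * t) - 2 * t) / ((1 - t * t) * (1 + t * t))).
  { unfold slopeA. field. split; nra. }
  assert (0 <= t * (alpha g * (1 + t * t) - 2 * t) / ((1 - t * t) * (1 + t * t))).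
  { apply Rmult_le_pos; [apply Rmult_le_pos; lra|]. left. apply Rinv_0_lt_compat, Rmult_lt_0_compat; nra. }
  lra.
Qed.

Lemma Apart'_lt u1 u2 : 0 < u1 < u2 -> u2 <= ustar g -> Apart' g u1 < Apart' g u2.
Proof.
  intros hu hu2. pose proof ln2_pos.
  assert (ht2 : tstar g <= exp (- u2)) by (rewrite <- exp_neg_ustar; apply exp_le_exp; lra).
  assert (ht21 : exp (- u2) < exp (- u1)) by (apply exp_increasing; lra).
  pose proof (slopeA_lt _ _ (conj ht2 ht21) (exp_neg_lt1 u1 ltac:(lra))).
  unfold Apart', Rdiv. apply Rmult_lt_compat_r; [apply Rinv_0_lt_compat|]; lra.
Qed.

Lemma Apart_strictly_convex : strictly_convex_on (fun u => 0 < u <= ustar g) (Apart g).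
Proof.
  apply strictly_convex_on_of_derive_increasing with (Apart' g).
  - intros x y z hx hy hz. lra.
  - intros x hx. apply is_derive_Apart. lra.
  - intros x y hx hy hxy. apply Apart'_lt; lra.
Qed.

Lemma Gobj'_neg m u : 0 < m -> 0 < u <= ulow g -> Gobj' m g u < 0.
Proof.
  intros hm hu. pose proof ln2_pos. pose proof (exp_pos (- (m * u))).
  assert (ht : alpha g <= exp (- u)) by (rewrite <- exp_neg_ulow; apply exp_le_exp; lra).
  pose proof (slopeA_nonpos _ (conj ht (exp_neg_lt1 u ltac:(lra)))).
  assert (0 < exp (- (m * u)) / (1 + exp (- (m * u)))) by (apply Rdiv_lt_0_compat; lra).
  assert (Apart' g u + Bpart' (m * u) < 0).
  { unfold Apart', Bpart', Rdiv in *.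
    assert (0 < / ln 2) by (apply Rinv_0_lt_compat; lra). nra. }
  unfold Gobj'. nra.
Qed.

(* For m >= 2, e^(-m u) <= t^2 with t = e^-u; this is where the hypothesis m >= 2 enters. *)
Lemma Gobj'_nonneg m u : 2 <= m -> ustar g <= u -> 0 <= Gobj' m g u.
Proof.
  intros hm hu. pose proof ln2_pos. pose proof ulow_range.
  assert (ht : exp (- u) <= tstar g) by (rewrite <- exp_neg_ustar; apply exp_le_exp; lra).
  pose proof (exp_pos (- u)). pose proof (exp_pos (- (m * u))).
  assert (he : exp (- (m * u)) <= exp (- u) * exp (- u)).
  { rewrite <- exp_plus. apply exp_le_exp. nra. }
  set (t := exp (- u)) in *. set (e := exp (- (m * u))) in *.
  pose proof (slopeA_ge t ltac:(lra)).
  assert (e / (1 + e) <= t * t / (1 + t * t)).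
  { apply Rmult_le_reg_r with ((1 + e) * (1 + t * t)); [nra|]. field_simplify; nra. }
  assert (0 <= Apart' g u + Bpart' (m * u)).
  { unfold Apart', Bpart'. fold t e.
    replace (slopeA g t / ln 2 + - (e / (1 + e)) / ln 2) with ((slopeA g t - e / (1 + e)) / ln 2)
      by (field; lra).
    apply Rdiv_le_0_compat; lra. }
  unfold Gobj'. nra.
Qed.

(* [Gobj m g] decreases on (0, ulow] and increases on [ustar, oo), so its minimum over
   the compact [ulow, ustar] is global. *)
Lemma Gobj_min_exists m : 2 <= m ->
  exists um, 0 < um <= ustar g /\ forall u, 0 < u -> Gobj m g um <= Gobj m g u.
Proof.
  intro hm. pose proof ulow_range as hu.
  destruct (continuity_ab_min (Gobj m g) (ulow g) (ustar g)) as [um [hmin hr]]; [lra| |].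
  { intros c hc. apply derivable_continuous_pt. exists (Gobj' m g c).
    apply is_derive_Reals, is_derive_Gobj. lra. }
  exists um. split; [lra|]. intros u hu0.
  destruct (Rlt_or_le u (ulow g)) as [h1|h1]; [|destruct (Rle_or_lt u (ustar g)) as [h2|h2]].
  - assert (Gobj m g (ulow g) <= Gobj m g u).
    { apply (le_of_derive_nonpos _ (Gobj' m g)); [lra| |].
      - intros c hc. apply is_derive_Gobj. lra.
      - intros c hc. left. apply Gobj'_neg; lra. }
    assert (Gobj m g um <= Gobj m g (ulow g)) by (apply hmin; lra). lra.
  - apply hmin. lra.
  - assert (Gobj m g (ustar g) <= Gobj m g u).
    { apply (le_of_derive_nonneg _ (Gobj' m g)); [lra| |].
      - intros c hc. apply is_derive_Gobj. lra.
      - intros c hc. apply Gobj'_nonneg; lra. }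
    assert (Gobj m g um <= Gobj m g (ustar g)) by (apply hmin; lra). lra.
Qed.

End FixedGamma.

Lemma Bpart'_lt x y : x < y -> Bpart' x < Bpart' y.
Proof.
  intro h. pose proof ln2_pos. pose proof (exp_pos (- y)). pose proof (exp_pos (- x)).
  assert (exp (- y) < exp (- x)) by (apply exp_increasing; lra).
  assert (exp (- y) / (1 + exp (- y)) < exp (- x) / (1 + exp (- x))).
  { apply Rmult_lt_reg_r with ((1 + exp (- y)) * (1 + exp (- x))); [nra|]. field_simplify; lra. }
  unfold Bpart', Rdiv at 1 3. apply Rmult_lt_compat_r; [apply Rinv_0_lt_compat|]; lra.
Qed.

Lemma Bpart_strictly_convex : strictly_convex_on (fun _ => True) Bpart.
Proof.
  apply strictly_convex_on_of_derive_increasing with Bpart'; auto.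
  - intros x _. apply is_derive_Bpart.
  - intros x y _ _. apply Bpart'_lt.
Qed.

Definition tanh_half (u : R) : R := (1 - exp (- u)) / (1 + exp (- u)).

Lemma tanh_half_range u : 0 < u -> 0 < tanh_half u < 1.
Proof.
  intro hu. pose proof (exp_neg_lt1 u hu). pose proof (exp_pos (- u)). unfold tanh_half.
  split; [apply Rdiv_lt_0_compat; lra|].
  apply Rmult_lt_reg_r with (1 + exp (- u)); [lra|]. field_simplify; lra.
Qed.

Lemma tanh_half_onto x : 0 < x < 1 -> exists u, 0 < u /\ tanh_half u = x.
Proof.
  intro hx. exists (ln ((1 + x) / (1 - x))). split.
  - rewrite <- ln_1. apply ln_increasing; [lra|].
    apply Rmult_lt_reg_r with (1 - x); [lra|]. field_simplify; lra.
  - unfold tanh_half. rewrite exp_Ropp, exp_ln.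
    + field. split; lra.
    + apply Rdiv_lt_0_compat; lra.
Qed.

(* With t = e^-u: 1 + x = 2/(1+t) and 1 - x = 2t/(1+t), so
   (1+x)^m + (1-x)^m = (2/(1+t))^m (1 + e^(-m u)). *)
Lemma Fobj_tanh_half m g u : 0 < u -> Fobj m g (tanh_half u) = Gobj m g u.
Proof.
  intro hu. pose proof (exp_neg_lt1 u hu). pose proof (exp_pos (- u)).
  pose proof (exp_pos (- (m * u))). pose proof ln2_pos.
  unfold Fobj, Gobj, Apart, Bpart, log2, Rpower, tanh_half. set (t := exp (- u)) in *.
  replace (1 + (1 - t) / (1 + t)) with (2 / (1 + t)) by (field; lra).
  replace (1 - (1 - t) / (1 + t)) with (2 * t / (1 + t)) by (field; lra).
  rewrite !ln_div, ln_mult by lra.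
  replace (ln t) with (- u) by (unfold t; symmetry; apply ln_exp).
  replace (exp (m * (ln 2 - ln (1 + t))) + exp (m * (ln 2 + - u - ln (1 + t))))
    with (exp (m * (ln 2 - ln (1 + t))) * (1 + exp (- (m * u))))
    by (rewrite Rmult_plus_distr_l, Rmult_1_r, <- exp_plus; f_equal; f_equal; ring).
  rewrite ln_mult, ln_exp by (try apply exp_pos; lra).
  field. lra.
Qed.

Lemma F_eq_of_is_min_value m g v : is_min_value m g v -> F m g = v.
Proof.
  intro hv.
  assert (hF : is_min_value m g (F m g)) by (unfold F; apply epsilon_spec; exists v; exact hv).
  destruct hF as [[x [hx ex]] hF]. destruct hv as [[y [hy ey]] hv].
  pose proof (hF y hy). pose proof (hv x hx). lra.
Qed.

Lemma F_eq_Gobj_min m g um :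
  0 < um -> (forall u, 0 < u -> Gobj m g um <= Gobj m g u) -> F m g = Gobj m g um.
Proof.
  intros hum hmin. apply F_eq_of_is_min_value. split.
  - exists (tanh_half um). split; [apply tanh_half_range; lra|]. apply Fobj_tanh_half; lra.
  - intros x hx. destruct (tanh_half_onto x hx) as [u [hu <-]].
    rewrite Fobj_tanh_half by lra. auto.
Qed.

Theorem mainTheorem16 : forall g : R, 0 < g < 1/2 ->
  strictly_convex_on (fun m => 2 <= m) (fun m => F m g).
Proof.
  intros g hg m1 m2 l h1 h2 hne hl. cbv beta.
  set (M := l * m1 + (1 - l) * m2).
  assert (hM : 2 <= M) by (unfold M; nra).
  destruct (Gobj_min_exists g hg m1 h1) as [u1 [hu1 hmin1]].
  destruct (Gobj_min_exists g hg m2 h2) as [u2 [hu2 hmin2]].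
  destruct (Gobj_min_exists g hg M hM) as [uM [huM hminM]].
  rewrite (F_eq_Gobj_min m1 g u1), (F_eq_Gobj_min m2 g u2), (F_eq_Gobj_min M g uM)
    by (assumption || lra).
  destruct (perspective_combination_lt (fun u => 0 < u <= ustar g) (Apart g) Bpart
              m1 m2 u1 u2 l) as [U [hU hlt]];
    try (intros; lra); auto using Apart_strictly_convex, Bpart_strictly_convex.
  fold M in hlt. pose proof (hminM U ltac:(lra)).
  unfold Gobj in *. nra.
Qed.
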